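(* Let $\mathcal G$ be a shortest-path game in which $\mathrm{Val}^{\mathrm d}(v)\neq+\infty$ and $\overline{\mathrm{Val}}^{\mathrm m}(v)\neq+\infty$ for all vertices $v$, and let $\rho$ be a memoryless strategy of Min such that $\mathbb P^{\rho,\tau}_v(\Diamond T)=1$ for every vertex $v$ and every memoryless strategy $\tau$ of Max. Let $\widetilde{\mathcal G}$ be the game graph defined below. Then (i) for every vertex $v$, every finite path in $\widetilde{\mathcal G}$ from $v$ ending in $T$ (at its first visit to $T$) has total weight at most $\mathrm{Val}^{\mathrm m,\rho}(v)$; and (ii) every cycle in $\widetilde{\mathcal G}$ has non-positive total weight.
   Context: A shortest-path game is $\mathcal G=(V_{\mathrm{Max}},V_{\mathrm{Min}},T,E,w)$ with finite $V=V_{\mathrm{Max}}\uplus V_{\mathrm{Min}}\uplus T$, edges $E\subseteq (V\setminus T)\times V$ with every non-target vertex having a successor, and integer weights $w\colon E\to\mathbb Z$. Plays from $v$ are finite paths ending at their first visit to $T$ (total payoff $\mathrm{TP}$ = sum of weights) or infinite paths avoiding $T$ ($\mathrm{TP}=+\infty$). Strategies of Min (resp. Max) map finite paths ending in $V_{\mathrm{Min}}$ (resp. $V_{\mathrm{Max}}$) to distributions on successors of the last vertex; deterministic = always Dirac, memoryless = depends only on the last vertex. $\mathrm{Val}^{\mathrm d}(v)=\inf_\sigma\sup_\tau\mathrm{TP}(\text{unique play from } v \text{ conforming to } \sigma,\tau)$ over deterministic strategies. For memoryless $\rho,\tau$, $\mathbb P^{\rho,\tau}_v,\mathbb E^{\rho,\tau}_v$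 refer to the induced Markov chain; $\mathrm{Val}^{\mathrm m,\rho}(v)=\sup_\tau\mathbb E^{\rho,\tau}_v(\mathrm{TP})$ over memoryless $\tau$, $\overline{\mathrm{Val}}^{\mathrm m}(v)=\inf_\rho\mathrm{Val}^{\mathrm m,\rho}(v)$. For $v\in V_{\mathrm{Min}}$ let $\widetilde E(v)=\arg\min_{v'\in\mathrm{supp}(\rho(v))}\big[w(v,v')+\mathrm{Val}^{\mathrm m,\rho}(v')\big]$, and let $\widetilde{\mathcal G}$ be obtained from $\mathcal G$ by removing every edge $(v,v')$ with $v\in V_{\mathrm{Min}}$ and $v'\notin\widetilde E(v)$. *)

From HB Require Import structures.
From mathcomp Require Import all_boot all_order all_algebra.
From mathcomp Require Import all_classical all_reals.
From mathcomp Require Import ereal topology normedtype sequences esum.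
From mathcomp Require Import Rstruct.
Set Implicit Arguments. Unset Strict Implicit. Unset Printing Implicit Defensive.
Import Order.TTheory GRing.Theory Num.Theory.
Local Open Scope classical_set_scope.
Local Open Scope ring_scope.

Notation RR := Rdefinitions.R.

Record game (V : finType) := Game {
  VMax : {set V};
  VMin : {set V};
  Tgt  : {set V};
  E    : rel V;
  w    : V -> V -> int }.

Definition wf_game (V : finType) (G : game V) : Prop :=
  [/\ (VMax G :&: VMin G = finset.set0)%SET, (VMax G :&: Tgt G = finset.set0)%SET,
      (VMin G :&: Tgt G = finset.set0)%SET & (VMax G :|: VMin G :|: Tgt G = [set: V])%SET] /\
  (forall u u', E G u u' -> u \notin Tgt G) /\
  (forall u, u \notin Tgt G -> exists u', E G u u').

Fixpoint path_weight (V : finType) (G : game V) (x : V) (s : seq V) : int :=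
  if s is y :: s' then (w G x y + path_weight G y s')%R else 0%R.

Definition first_visit_end (V : finType) (G : game V) (x : V) (s : seq V) : bool :=
  (last x s \in Tgt G) && all (fun y => y \notin Tgt G) (belast x s).

Definition det_strategy (V : finType) (G : game V) (Own : {set V})
    (sg : seq V -> V) : Prop :=
  forall x s, last x s \in Own -> E G (last x s) (sg (x :: s)).

Fixpoint det_prefix (V : finType) (G : game V) (sg tau : seq V -> V) (v : V)
    (n : nat) : seq V :=
  if n is n'.+1 then
    let h := det_prefix G sg tau v n' in
    let u := last v h in
    if u \in Tgt G then h
    else rcons h (if u \in VMin G then sg h else tau h)
  else [:: v].

Definition det_play (V : finType) (G : game V) (sg tau : seq V -> V) (v : V)
    (n : nat) : V := last v (det_prefix G sg tau v n).

Definition first_hit (V : finType) (G : game V) (p : nat -> V) : nat :=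
  xget 0%N [set n | p n \in Tgt G /\ forall m, (m < n)%N -> p m \notin Tgt G].

Definition TP_seq (V : finType) (G : game V) (p : nat -> V) : \bar RR :=
  if asbool (exists n, p n \in Tgt G) then
    ((\sum_(i < first_hit G p) w G (p i) (p i.+1))%:~R)%:E
  else +oo%E.

Definition Val_d (V : finType) (G : game V) (v : V) : \bar RR :=
  ereal_inf [set ereal_sup [set TP_seq G (det_play G sg tau v)
                           | tau in [set tau | det_strategy G (VMax G) tau]]
            | sg in [set sg | det_strategy G (VMin G) sg]].

Definition ml_strategy (V : finType) (G : game V) (Own : {set V})
    (rho : V -> V -> RR) : Prop :=
  forall u, u \in Own ->
    [/\ (forall u', 0 <= rho u u'), \sum_(u' : V) rho u u' = 1 &
        (forall u', rho u u' != 0 -> E G u u')].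

Definition trans (V : finType) (G : game V) (rho tau : V -> V -> RR) (u u' : V) : RR :=
  if u \in VMin G then rho u u' else if u \in VMax G then tau u u' else 0.

Fixpoint path_prob (V : finType) (G : game V) (rho tau : V -> V -> RR)
    (x : V) (s : seq V) : RR :=
  if s is y :: s' then trans G rho tau x y * path_prob G rho tau y s' else 1.

(* P^{rho,tau}_v(<> T): sum of the probabilities of the finite paths from v
   ending at their first visit to T *)
Definition reach_prob (V : finType) (G : game V) (rho tau : V -> V -> RR) (v : V)
    : \bar RR :=
  \esum_(s in [set s | first_visit_end G v s]) (path_prob G rho tau v s)%:E.

(* E^{rho,tau}_v(TP): +oo if T is not reached almost surely, otherwise
   E(TP^+) - E(TP^-) computed over the (countably many) terminating paths *)
Definition exp_TP (V : finType) (G : game V) (rho tau : V -> V -> RR) (v : V)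
    : \bar RR :=
  if reach_prob G rho tau v == 1%E then
    (\esum_(s in [set s | first_visit_end G v s])
        (path_prob G rho tau v s * Num.max ((path_weight G v s)%:~R) 0)%:E
     - \esum_(s in [set s | first_visit_end G v s])
        (path_prob G rho tau v s * Num.max (- (path_weight G v s)%:~R) 0)%:E)%E
  else +oo%E.

Definition Val_m_rho (V : finType) (G : game V) (rho : V -> V -> RR) (v : V)
    : \bar RR :=
  ereal_sup [set exp_TP G rho tau v | tau in [set tau | ml_strategy G (VMax G) tau]].

Definition Val_m_bar (V : finType) (G : game V) (v : V) : \bar RR :=
  ereal_inf [set Val_m_rho G rho v | rho in [set rho | ml_strategy G (VMin G) rho]].

Definition tildeE (V : finType) (G : game V) (rho : V -> V -> RR) (u u' : V) : Prop :=
  rho u u' != 0 /\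
  forall u'', rho u u'' != 0 ->
    ((w G u u')%:~R%:E + Val_m_rho G rho u' <= (w G u u'')%:~R%:E + Val_m_rho G rho u'')%E.

Definition tilde_edge (V : finType) (G : game V) (rho : V -> V -> RR) (u u' : V) : Prop :=
  E G u u' /\ (u \in VMin G -> tildeE G rho u u').

Fixpoint tilde_path (V : finType) (G : game V) (rho : V -> V -> RR)
    (x : V) (s : seq V) : Prop :=
  if s is y :: s' then tilde_edge G rho x y /\ tilde_path G rho y s' else True.

From HB Require Import structures.
From mathcomp Require Import all_boot all_order all_algebra.
From mathcomp Require Import all_classical all_reals.
From mathcomp Require Import ereal topology normedtype sequences esum.
From mathcomp Require Import Rstruct.
From mathcomp Require Import ring lra.
Import Order.TTheory GRing.Theory Num.Theory.
Local Open Scope classical_set_scope.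
Local Open Scope ring_scope.
Set Implicit Arguments. Unset Strict Implicit. Unset Printing Implicit Defensive.

(* Against a memoryless tau, the play is an absorbing Markov chain that
   reaches T almost surely, so its expected total payoff J is the unique solution
   of J = 0 on T and J(u) = sum_u' P(u,u') (w(u,u') + J(u')) elsewhere; this
   uniqueness, and every comparison of such payoffs, rest on a minimum principle
   for the chain.
   A deterministic memoryless strategy of Max maximising sum_v J(v) satisfies
   w(u,u') + J(u') <= J(u) on every edge leaving a Max vertex (otherwise switching
   to u' would improve it), hence dominates every memoryless tau, and so
   J = Val^{m,rho}. At a Min vertex J(u) is a rho-average of w(u,u') + J(u'), so it
   is at least the minimum of these, which is what the edges of G~ attain. Thus
   w(u,u') + J(u') <= J(u) along G~, and summing along a path gives (i) because
   J vanishes on T, and (ii) because a cycle telescopes. *)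

Lemma le_esum_subset (R : realType) (I : choiceType) (A B : set I) (a : I -> \bar R) :
  A `<=` B -> (\esum_(i in A) a i <= \esum_(i in B) a i)%E.
Proof.
move=> AB; apply: ge_ereal_sup => _ [X [finX XA] <-].
by apply: esum_ge; exists X => //; split => //; apply: subset_trans XA AB.
Qed.

Lemma esumZl (R : realType) (I : choiceType) (S : set I) (a : I -> \bar R) (k : R) :
  0 <= k -> (forall i, (0 <= a i)%E) ->
  \esum_(i in S) (k%:E * a i)%E = (k%:E * \esum_(i in S) a i)%E.
Proof.
move=> k0 a0; rewrite /esum -ereal_supZl //; last first.
  by apply/set0P; exists 0%E; exists set0; [exact: fsets_set0 | rewrite fsbig_set0].
congr ereal_sup; apply/seteqP; split => [_ [A [finA AS] <-]|_ [_ [A [finA AS] <-] <-]].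
  by exists (\sum_(i \in A) a i)%E; [exists A | rewrite !fsbig_finite // ge0_sume_distrr].
by exists A => //; rewrite !fsbig_finite // ge0_sume_distrr.
Qed.

Lemma esum_pos_neg_parts (R : realType) (I : choiceType) (S : set I)
    (p f f1 f2 : I -> R) (r1 r2 : R) :
  (forall i, 0 <= p i) -> (forall i, 0 <= f1 i) -> (forall i, 0 <= f2 i) ->
  (forall i, f i = f1 i - f2 i) ->
  \esum_(i in S) (p i * f1 i)%:E = r1%:E -> \esum_(i in S) (p i * f2 i)%:E = r2%:E ->
  (\esum_(i in S) (p i * Num.max (f i) 0)%:E
   - \esum_(i in S) (p i * Num.max (- f i) 0)%:E)%E = (r1 - r2)%:E.
Proof.
move=> p_ge0 f1_ge0 f2_ge0 fE F1 F2.
have max_ge0 (x : R) : 0 <= Num.max x 0 by rewrite le_max lexx orbT.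
have term_ge0 i x : 0 <= x -> (0 <= (p i * x)%:E)%E.
  by move=> x0; rewrite lee_fin mulr_ge0.
have fin (x : \bar R) (r : R) : (0 <= x)%E -> (x <= r%:E)%E -> x \is a fin_num.
  by move=> x0 xr; rewrite ge0_fin_numE // (le_lt_trans xr) ?ltry.
set E1 := esum S _; set E2 := esum S _.
have E1_fin : E1 \is a fin_num.
  apply: (fin _ r1); first by apply: esum_ge0 => i _; apply: term_ge0.
  rewrite -F1; apply: le_esum => i _.
  by rewrite lee_fin ler_wpM2l // ge_max f1_ge0 fE lerBlDr lerDl f2_ge0.
have E2_fin : E2 \is a fin_num.
  apply: (fin _ r2); first by apply: esum_ge0 => i _; apply: term_ge0.
  rewrite -F2; apply: le_esum => i _.
  by rewrite lee_fin ler_wpM2l // ge_max f2_ge0 fE opprB lerBlDr lerDl f1_ge0.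
have max_split (x : R) : Num.max x 0 = Num.max (- x) 0 + x.
  case: (leP 0 x) => x0; first by rewrite max_r ?add0r // oppr_le0.
  by rewrite max_l ?addNr // oppr_ge0 ltW.
have E12 : (E1 + r2%:E = r1%:E + E2)%E.
  rewrite -F1 -F2 -!esumD => [|i _|i _|i _|i _]; try by apply: term_ge0.
  by apply: eq_esum => i _; rewrite -!EFinD max_split fE; congr EFin; ring.
rewrite -(fineK E1_fin) -(fineK E2_fin) -EFinB; congr EFin.
have : fine E1 + r2 = r1 + fine E2 by apply: EFin_inj; rewrite !EFinD !fineK.
lra.
Qed.

Section AbsorbingLinearSystem.
Variables (F : fieldType) (V : finType) (T : {set V}) (Q : V -> V -> F).
Hypothesis homogeneous_eq0 : forall z : V -> F, (forall t, t \in T -> z t = 0) ->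
  (forall u, u \notin T -> z u = \sum_v Q u v * z v) -> forall u, z u = 0.

Let n := #|V|.
Let vec (y : 'rV[F]_n) (u : V) : F := y 0 (enum_rank u).
Let A : 'M[F]_n :=
  1%:M - \matrix_(i, j) (if enum_val j \in T then 0 else Q (enum_val j) (enum_val i)).

Let vec_mulA y u :
  vec (y *m A) u = vec y u - (if u \in T then 0 else \sum_v Q u v * vec y v).
Proof.
rewrite /vec mulmxBr mulmx1 !mxE; congr (_ - _).
case: ifP => uT; first by rewrite big1 // => i _; rewrite mxE enum_rankK uT mulr0.
rewrite [RHS]big_enum_val /=; apply: eq_bigr => i _.
by rewrite mxE enum_rankK uT mulrC enum_valK.
Qed.

Let A_unit : A \in unitmx.
Proof.
rewrite -row_free_unit; apply: inj_row_free => y yA0.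
have hom u : vec y u = if u \in T then 0 else \sum_v Q u v * vec y v.
  by apply/eqP; rewrite -subr_eq0 -vec_mulA yA0 /vec mxE.
have y0 : forall u, vec y u = 0.
  by apply: homogeneous_eq0 => [t tT|u uT]; rewrite hom ?tT ?(negPf uT).
by apply/rowP => i; rewrite mxE -[i]enum_valK; apply: y0.
Qed.

Lemma absorbing_system_solvable (b : V -> F) : exists y : V -> F,
  (forall t, t \in T -> y t = 0) /\
  (forall u, u \notin T -> y u = b u + \sum_v Q u v * y v).
Proof.
pose rhs : 'rV[F]_n := \row_i (if enum_val i \in T then 0 else b (enum_val i)).
have sol u : vec (rhs *m invmx A) u
    - (if u \in T then 0 else \sum_v Q u v * vec (rhs *m invmx A) v)
  = if u \in T then 0 else b u.
  by rewrite -vec_mulA mulmxKV // /vec mxE enum_rankK.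
exists (vec (rhs *m invmx A)); split => [t tT|u uT].
  by move: (sol t); rewrite tT subr0.
by move/eqP: (sol u); rewrite (negPf uT) subr_eq => /eqP.
Qed.

End AbsorbingLinearSystem.

Fixpoint path_cost (R : nmodType) (V : Type) (c : V -> V -> R) (x : V) (s : seq V) : R :=
  if s is y :: s' then c x y + path_cost c y s' else 0.

Section AbsorbingChain.
Variables (R : realType) (V : finType) (T : {set V}).

(* [hits_first (Tgt G)] is [first_visit_end G], for a bare target set. *)
Definition hits_first (x : V) (s : seq V) : bool :=
  (last x s \in T) && all (fun y => y \notin T) (belast x s).

Lemma hits_first_nil x : hits_first x [::] = (x \in T).
Proof. by rewrite /hits_first /= andbT. Qed.

Lemma hits_first_cons x y s : hits_first x (y :: s) = (x \notin T) && hits_first y s.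
Proof. by rewrite /hits_first /= andbCA. Qed.

Definition hit_paths (Q : pred nat) (v : V) : set (seq V) :=
  [set s | hits_first v s && Q (size s)].

Lemma hit_paths_all v : hit_paths predT v = [set s | hits_first v s].
Proof. by apply/seteqP; split => s; rewrite /hit_paths /= andbT. Qed.

Lemma hit_paths_tgt Q t s : t \in T -> hit_paths Q t s -> s = [::].
Proof. by move=> tT; case: s => // y s; rewrite /hit_paths /= hits_first_cons tT. Qed.

Lemma esum_hit_paths_cons (Q Q' : pred nat) (F : seq V -> \bar R) u :
  (forall k, Q' k = Q k.+1) -> (forall s, (0 <= F s)%E) -> u \notin T ->
  \esum_(s in hit_paths Q u) F s = \sum_u' \esum_(s in hit_paths Q' u') F (u' :: s).
Proof.
move=> QQ' F0 uT.
transitivity (\esum_(s in hit_paths Q u) \sum_u' (if head u s == u' then F s else 0%E)).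
  apply: eq_esum => s _; rewrite -big_mkcond /=.
  by rewrite (big_pred1 (head u s)) // => x; rewrite /= eq_sym.
rewrite esum_sum; last by move=> s u' _ _; case: ifP.
apply: eq_bigr => u' _.
transitivity (\esum_(s in hit_paths Q u `&` [set s | head u s = u']) F s).
  rewrite esum_mkcondr; apply: eq_esum => s _.
  by case: eqP => h; [rewrite mem_set | rewrite memNset].
rewrite -(esum_image _ (cons u')); last by move=> a b _ _ [].
congr esum; apply/seteqP; split.
  move=> [|a s] [hs /= hd].
    by move: hs; rewrite /hit_paths /= hits_first_nil (negPf uT).
  rewrite -hd; exists s => //.
  by move: hs; rewrite /hit_paths /= hits_first_cons QQ' => /andP[/andP[_ ->] ->].
move=> _ [s hs <-]; split => //=.
by move: hs; rewrite /hit_paths /= hits_first_cons uT QQ'.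
Qed.

Variable P : V -> V -> R.

Fixpoint chain_prob (x : V) (s : seq V) : R :=
  if s is y :: s' then P x y * chain_prob y s' else 1.

Definition hit_prob (Q : pred nat) (v : V) : \bar R :=
  \esum_(s in hit_paths Q v) (chain_prob v s)%:E.

Definition exp_cost (c : V -> V -> R) (Q : pred nat) (v : V) : \bar R :=
  \esum_(s in hit_paths Q v) (chain_prob v s * path_cost c v s)%:E.

Hypothesis P_ge0 : forall u u', 0 <= P u u'.
Hypothesis P_sum1 : forall u, u \notin T -> \sum_u' P u u' = 1.

Lemma chain_prob_ge0 x s : 0 <= chain_prob x s.
Proof. by elim: s x => [|y s IH] x /=; rewrite ?ler01 ?mulr_ge0. Qed.

Lemma superharmonic_argmin_succ (z : V -> R) x y :
  (forall u, z x <= z u) -> x \notin T -> \sum_u P x u * z u <= z x ->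
  P x y != 0 -> z y = z x.
Proof.
move=> zmin xT zsup Pxy.
have dev_ge0 u : 0 <= P x u * (z u - z x) by rewrite mulr_ge0 ?subr_ge0.
have dev_sum0 : \sum_u P x u * (z u - z x) = 0.
  apply/eqP; rewrite eq_le (sumr_ge0 _ (fun u _ => dev_ge0 u)) andbT.
  under eq_bigr do rewrite mulrBr.
  by rewrite sumrB -mulr_suml P_sum1 // mul1r subr_le0.
have := psumr_eq0P (P := predT) (fun u _ => dev_ge0 u) dev_sum0 (i := y) isT.
by move/eqP; rewrite mulf_eq0 (negPf Pxy) subr_eq0 => /eqP.
Qed.

Hypothesis hit_as :
  forall v, \esum_(s in [set s | hits_first v s]) (chain_prob v s)%:E = 1%E.

Lemma hit_path_pos v : exists2 s, hits_first v s & chain_prob v s != 0.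
Proof.
case: (pselect (exists2 s, hits_first v s & chain_prob v s != 0)) => // none.
have : \esum_(s in [set s | hits_first v s]) (chain_prob v s)%:E = 0%E.
  apply: esum1 => s /= hs; apply/eqP; rewrite eqe; apply/negPn/negP => ps.
  by apply: none; exists s.
by rewrite hit_as => /eqP; rewrite eqe oner_eq0.
Qed.

(* A negative minimum of z would spread along every path of positive probability
   (superharmonic_argmin_succ), which then could not reach T. *)
Lemma min_principle (z : V -> R) :
  (forall t, t \in T -> 0 <= z t) ->
  (forall u, u \notin T -> \sum_u' P u u' * z u' <= z u) ->
  forall u, 0 <= z u.
Proof.
move=> zT zsup u0; rewrite leNgt; apply/negP => zu0_lt0.
case: (@arg_minP _ _ V u0 predT z) => // a _ amin.
have za_lt0 : z a < 0 := le_lt_trans (amin u0 isT) zu0_lt0.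
have notT x : z x = z a -> x \notin T.
  by move=> zx; apply: contraTN za_lt0 => /zT; rewrite zx -leNgt.
have stays s x : z x = z a -> chain_prob x s != 0 -> z (last x s) = z a.
  elim: s x => [|y s IH] x //= zx; rewrite mulf_eq0 negb_or => /andP[Pxy ps].
  have xT := notT x zx.
  have zmin u : z x <= z u by rewrite zx amin.
  by apply: IH ps; rewrite -zx (superharmonic_argmin_succ zmin xT (zsup x xT) Pxy).
have [s /andP[lT _] ps] := hit_path_pos a.
by move: (notT _ (stays s a erefl ps)); rewrite lT.
Qed.

Lemma harmonic_eq0 (z : V -> R) :
  (forall t, t \in T -> z t = 0) ->
  (forall u, u \notin T -> z u = \sum_u' P u u' * z u') ->
  forall u, z u = 0.
Proof.
move=> zT zeq u; apply/eqP; rewrite eq_le; apply/andP; split.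
  rewrite -oppr_ge0; move: u; apply: min_principle => [t tT|u uT].
    by rewrite zT ?oppr0.
  by rewrite zeq // -sumrN; under eq_bigr do rewrite mulrN.
by move: u; apply: min_principle => [t tT|u uT]; [rewrite zT | rewrite zeq].
Qed.

Lemma hit_prob_all v : hit_prob predT v = 1%E.
Proof. by rewrite /hit_prob hit_paths_all hit_as. Qed.

Lemma hit_prob_le1 Q v : (hit_prob Q v <= 1)%E.
Proof.
rewrite -(hit_prob_all v); apply: le_esum_subset => s /andP[hs _].
by rewrite /hit_paths /= hs.
Qed.

Section NonnegativeCost.
Variable c : V -> V -> R.
Hypothesis c_ge0 : forall u u', 0 <= c u u'.

Lemma path_cost_ge0 x s : 0 <= path_cost c x s.
Proof. by elim: s x => [|y s IH] x //=; rewrite addr_ge0. Qed.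

Lemma exp_cost_tgt Q t : t \in T -> exp_cost c Q t = 0%E.
Proof.
by move=> tT; rewrite /exp_cost esum1 // => s /(hit_paths_tgt tT) ->; rewrite mulr0.
Qed.

Lemma exp_cost_cons (Q Q' : pred nat) u : (forall k, Q' k = Q k.+1) -> u \notin T ->
  exp_cost c Q u =
  (\sum_u' (P u u')%:E * ((c u u')%:E * hit_prob Q' u' + exp_cost c Q' u'))%E.
Proof.
move=> QQ' uT; rewrite /exp_cost (esum_hit_paths_cons QQ') //; last first.
  by move=> s; rewrite lee_fin mulr_ge0 ?chain_prob_ge0 ?path_cost_ge0.
apply: eq_bigr => u' _.
have p_ge0 s : (0 <= (chain_prob u' s)%:E)%E by rewrite lee_fin chain_prob_ge0.
have pc_ge0 s : (0 <= (chain_prob u' s * path_cost c u' s)%:E)%E.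
  by rewrite lee_fin mulr_ge0 ?chain_prob_ge0 ?path_cost_ge0.
have cp_ge0 s : (0 <= (c u u')%:E * (chain_prob u' s)%:E)%E.
  by rewrite mule_ge0 ?lee_fin ?c_ge0 ?chain_prob_ge0.
transitivity (\esum_(s in hit_paths Q' u') ((P u u')%:E *
    ((c u u')%:E * (chain_prob u' s)%:E + (chain_prob u' s * path_cost c u' s)%:E)))%E.
  by apply: eq_esum => s _ /=; rewrite -!EFinM; congr EFin; ring.
rewrite esumZl //; last by move=> s; rewrite adde_ge0.
rewrite esumD; [|by move=> s _|by move=> s _].
by rewrite esumZl.
Qed.

Section Supersolution.
Variable y : V -> R.
Hypothesis y_ge0 : forall u, 0 <= y u.
Hypothesis y_super : forall u, u \notin T -> \sum_u' P u u' * (c u u' + y u') <= y u.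

Lemma exp_cost_bounded_le n u : (exp_cost c (fun k => k <= n)%N u <= (y u)%:E)%E.
Proof.
elim: n u => [|n IH] u; have [uT|uT] := boolP (u \in T);
  try by rewrite exp_cost_tgt // lee_fin.
  rewrite /exp_cost esum1 ?lee_fin // => s /andP[hs].
  by rewrite leqn0 size_eq0 => /eqP s0; move: hs; rewrite s0 hits_first_nil (negPf uT).
rewrite (@exp_cost_cons _ (fun k => k <= n)%N) //.
apply: (@le_trans _ _ (\sum_u' (P u u')%:E * ((c u u')%:E + (y u')%:E))%E).
  apply: lee_sum => u' _; apply: lee_wpmul2l; first by rewrite lee_fin.
  apply: leeD; last exact: IH.
  by rewrite -[leRHS]mule1; apply: lee_wpmul2l; [rewrite lee_fin | apply: hit_prob_le1].
by under eq_bigr do rewrite -EFinD -EFinM; rewrite sumEFin lee_fin y_super.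
Qed.

Lemma exp_cost_le u : (exp_cost c predT u <= (y u)%:E)%E.
Proof.
apply: ge_ereal_sup => _ [X [finX XS] <-].
(* A finite set of paths has bounded length. *)
pose n := (\max_(s <- finmap.enum_fset (fset_set X)) size s)%N.
apply: le_trans (exp_cost_bounded_le n u).
apply: esum_ge; exists X => //; split => // s Xs.
have := XS s Xs; rewrite /hit_paths /= andbT => ->.
by apply: (@leq_bigmax_seq _ _ predT size s) => //; rewrite in_fset_set // inE.
Qed.

End Supersolution.

Lemma exp_cost_solution : exists g : V -> R,
  [/\ (forall t, t \in T -> g t = 0),
      (forall u, u \notin T -> g u = \sum_u' P u u' * (c u u' + g u')) &
      (forall u, exp_cost c predT u = (g u)%:E)].
Proof.
have [y [yT yeq]] :=
  absorbing_system_solvable harmonic_eq0 (fun u => \sum_u' P u u' * c u u').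
have y_ge0 : forall u, 0 <= y u.
  apply: min_principle => [t tT|u uT]; first by rewrite yT.
  by rewrite [leRHS]yeq // lerDr sumr_ge0 // => u' _; rewrite mulr_ge0.
have y_super u : u \notin T -> \sum_u' P u u' * (c u u' + y u') <= y u.
  by move=> uT; under eq_bigr do rewrite mulrDr; rewrite big_split /= -yeq.
have fin u : exp_cost c predT u \is a fin_num.
  rewrite ge0_fin_numE; last first.
    by apply: esum_ge0 => s _; rewrite lee_fin mulr_ge0 ?chain_prob_ge0 ?path_cost_ge0.
  exact: le_lt_trans (exp_cost_le y_ge0 y_super u) (ltry _).
exists (fun u => fine (exp_cost c predT u)); split => [t tT|u uT|u].
- by rewrite exp_cost_tgt.
- apply: EFin_inj; rewrite (fineK (fin u)) (@exp_cost_cons predT predT) // -sumEFin.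
  by apply: eq_bigr => v _; rewrite hit_prob_all mule1 EFinM EFinD fineK.
- by rewrite fineK.
Qed.

End NonnegativeCost.

Lemma exp_signed_cost_solution (c : V -> V -> R) : exists x : V -> R,
  [/\ (forall t, t \in T -> x t = 0),
      (forall u, u \notin T -> x u = \sum_u' P u u' * (c u u' + x u')) &
      (forall v,
        (\esum_(s in [set s | hits_first v s])
            (chain_prob v s * Num.max (path_cost c v s) 0)%:E
         - \esum_(s in [set s | hits_first v s])
            (chain_prob v s * Num.max (- path_cost c v s) 0)%:E)%E = (x v)%:E)].
Proof.
(* With K >= |c|, the cost c is the difference of the nonnegative costs c + K and K. *)
pose K : R := \sum_a \sum_b `|c a b|.
have cK a b : `|c a b| <= K.
  rewrite /K (bigD1 a) //= (bigD1 b) //= -addrA lerDl.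
  by rewrite addr_ge0 ?sumr_ge0 // => i _; rewrite sumr_ge0.
pose cpos a b := c a b + K.
pose cneg (a b : V) := K.
have cpos_ge0 a b : 0 <= cpos a b by have := cK a b; rewrite /cpos ler_norml; lra.
have cneg_ge0 a b : 0 <= cneg a b := le_trans (normr_ge0 _) (cK a b).
have costE u s : path_cost c u s = path_cost cpos u s - path_cost cneg u s.
  by elim: s u => [|y s IH] u /=; [rewrite subrr | rewrite IH /cpos /cneg; ring].
have [g1 [g1T g1e g1E]] := exp_cost_solution cpos_ge0.
have [g2 [g2T g2e g2E]] := exp_cost_solution cneg_ge0.
exists (fun u => g1 u - g2 u); split => [t tT|u uT|v].
- by rewrite g1T ?g2T ?subr0.
- by rewrite g1e // g2e // -sumrB; apply: eq_bigr => u' _; rewrite /cpos /cneg; ring.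
have G1 := g1E v; have G2 := g2E v; rewrite /exp_cost hit_paths_all in G1 G2.
apply: (esum_pos_neg_parts _ _ _ _ G1 G2) => s; rewrite ?costE //.
- exact: chain_prob_ge0.
- exact: path_cost_ge0.
- exact: path_cost_ge0.
Qed.

End AbsorbingChain.

Section WellFormedGame.
Variables (V : finType) (G : game V).
Hypothesis HG : wf_game G.

Lemma max_notin_tgt u : u \in VMax G -> u \notin Tgt G.
Proof. by case: HG => -[_ MT _ _] _ uM; rewrite (disjointFr _ uM) // -setI_eq0 MT. Qed.

Lemma min_notin_tgt u : u \in VMin G -> u \notin Tgt G.
Proof. by case: HG => -[_ _ MT _] _ uM; rewrite (disjointFr _ uM) // -setI_eq0 MT. Qed.

Lemma min_notin_max u : u \in VMin G -> u \notin VMax G.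
Proof. by case: HG => -[MM _ _ _] _ uM; rewrite (disjointFl _ uM) // -setI_eq0 MM. Qed.

Lemma max_of_notin u : u \notin Tgt G -> u \notin VMin G -> u \in VMax G.
Proof.
case: HG => -[_ _ _ cover] _ uT uMin; move/setP/(_ u): cover.
by rewrite !finset.in_setU finset.in_setT (negPf uT) (negPf uMin) !orbF.
Qed.

Lemma edge_notin_tgt u u' : E G u u' -> u \notin Tgt G.
Proof. by case: HG => _ [+ _]; apply. Qed.

Lemma max_has_succ u : u \in VMax G -> exists u', E G u u'.
Proof. by case: HG => _ [_ +] /max_notin_tgt; apply. Qed.

End WellFormedGame.

Section FixedMinStrategy.
Variables (V : finType) (G : game V).
Hypothesis HG : wf_game G.
Variable rho : V -> V -> RR.
Hypothesis Hrho : ml_strategy G (VMin G) rho.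

Local Notation T := (Tgt G).

Lemma path_probE tau x s : path_prob G rho tau x s = chain_prob (trans G rho tau) x s.
Proof. by elim: s x => [|y s IH] x //=; rewrite IH. Qed.

Lemma path_weightE x s :
  (path_weight G x s)%:~R = path_cost (fun u u' => (w G u u')%:~R : RR) x s.
Proof. by elim: s x => [|y s IH] x //=; rewrite intrD IH. Qed.

Lemma tilde_path_weight_le (J : V -> RR) :
  (forall u u', tilde_edge G rho u u' -> (w G u u')%:~R + J u' <= J u) ->
  forall v s, tilde_path G rho v s -> (path_weight G v s)%:~R + J (last v s) <= J v.
Proof.
move=> edge_le v s; elim: s v => [|y s IH] v /=; first by rewrite add0r.
by case=> /edge_le vy /IH; rewrite intrD; lra.
Qed.

Lemma trans_min tau u u' : u \in VMin G -> trans G rho tau u u' = rho u u'.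
Proof. by rewrite /trans => ->. Qed.

Lemma trans_max tau u u' : u \in VMax G -> trans G rho tau u u' = tau u u'.
Proof.
by move=> uM; rewrite /trans uM; case: ifP => // /(min_notin_max HG); rewrite uM.
Qed.

Section MaxStrategy.
Variable tau : V -> V -> RR.
Hypothesis Htau : ml_strategy G (VMax G) tau.

Lemma trans_ge0 u u' : 0 <= trans G rho tau u u'.
Proof.
rewrite /trans; case: ifP => [uMin|_]; first by case: (Hrho uMin).
by case: ifP => // uM; case: (Htau uM).
Qed.

Lemma trans_sum1 u : u \notin T -> \sum_u' trans G rho tau u u' = 1.
Proof.
move=> uT; have [uMin|uMin] := boolP (u \in VMin G).
  by under eq_bigr do rewrite trans_min //; case: (Hrho uMin).
have uM := max_of_notin HG uT uMin.
by under eq_bigr do rewrite trans_max //; case: (Htau uM).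
Qed.

End MaxStrategy.

Hypothesis Hreach : forall v tau, ml_strategy G (VMax G) tau ->
  reach_prob G rho tau v = 1%E.

Lemma trans_hit_as tau : ml_strategy G (VMax G) tau -> forall v,
  \esum_(s in [set s | hits_first T v s]) (chain_prob (trans G rho tau) v s)%:E = 1%E.
Proof.
by move=> Htau v; rewrite -(Hreach v Htau); apply: eq_esum => s _; rewrite path_probE.
Qed.

Lemma trans_min_principle tau : ml_strategy G (VMax G) tau ->
  forall z : V -> RR, (forall t, t \in T -> 0 <= z t) ->
  (forall u, u \notin T -> \sum_u' trans G rho tau u u' * z u' <= z u) ->
  forall u, 0 <= z u.
Proof.
move=> Htau.
by apply: min_principle (trans_hit_as Htau); [apply: trans_ge0 | apply: trans_sum1].
Qed.

(* [fine] sends +oo to 0, but payoff_bellman shows that exp_TP is finite here. *)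
Definition payoff (tau : V -> V -> RR) (v : V) : RR := fine (exp_TP G rho tau v).

Lemma payoff_bellman tau : ml_strategy G (VMax G) tau ->
  [/\ (forall t, t \in T -> payoff tau t = 0),
      (forall u, u \notin T ->
         payoff tau u = \sum_u' trans G rho tau u u' * ((w G u u')%:~R + payoff tau u')) &
      (forall v, exp_TP G rho tau v = (payoff tau v)%:E)].
Proof.
move=> Htau.
have [x [xT xeq xE]] := exp_signed_cost_solution (trans_ge0 Htau) (trans_sum1 Htau)
  (trans_hit_as Htau) (fun u u' => (w G u u')%:~R).
have expE v : exp_TP G rho tau v = (x v)%:E.
  rewrite /exp_TP Hreach // eqxx -xE.
  by congr (_ - _)%E; apply: eq_esum => s _; rewrite path_probE path_weightE.
have payoffE v : payoff tau v = x v by rewrite /payoff expE.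
split => [t tT|u uT|v]; rewrite ?payoffE ?expE //; first exact: xT.
by rewrite xeq //; apply: eq_bigr => u' _; rewrite payoffE.
Qed.

Definition max_optimal (J : V -> RR) :=
  forall u u', u \in VMax G -> E G u u' -> (w G u u')%:~R + J u' <= J u.

Lemma excessive_dominates_payoff (J : V -> RR) tau : ml_strategy G (VMax G) tau ->
  (forall t, t \in T -> J t = 0) ->
  (forall u, u \in VMin G -> \sum_u' rho u u' * ((w G u u')%:~R + J u') <= J u) ->
  max_optimal J -> forall v, payoff tau v <= J v.
Proof.
move=> Htau JT Jmin Jmax v; rewrite -subr_ge0; move: v.
have [JT' Jeq' _] := payoff_bellman Htau.
apply: (trans_min_principle Htau) => [t tT|u uT]; first by rewrite JT ?JT' ?subr0.
have J_super : \sum_u' trans G rho tau u u' * ((w G u u')%:~R + J u') <= J u.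
  have [uMin|uMin] := boolP (u \in VMin G).
    by under eq_bigr do rewrite trans_min //; apply: Jmin.
  have uM := max_of_notin HG uT uMin.
  case: (Htau u uM) => tau_ge0 tau_sum1 tau_edge.
  under eq_bigr do rewrite trans_max //.
  apply: (@le_trans _ _ (\sum_u' tau u u' * J u)); last first.
    by rewrite -mulr_suml tau_sum1 mul1r.
  apply: ler_sum => u' _.
  have [->|tau_nz] := eqVneq (tau u u') 0; first by rewrite !mul0r.
  by apply: ler_wpM2l => //; apply: Jmax => //; apply: tau_edge.
rewrite [X in _ <= _ - X](Jeq' u uT).
have -> : \sum_u' trans G rho tau u u' * (J u' - payoff tau u') =
    \sum_u' trans G rho tau u u' * ((w G u u')%:~R + J u')
  - \sum_u' trans G rho tau u u' * ((w G u u')%:~R + payoff tau u').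
  by rewrite -sumrB; apply: eq_bigr => u' _; ring.
by move: J_super; lra.
Qed.

Definition choice_strategy (s : {ffun V -> V}) : V -> V -> RR :=
  fun u u' => (u' == s u)%:R.

Definition legal_choice (s : {ffun V -> V}) : bool :=
  [forall u, (u \in VMax G) ==> E G u (s u)].

Local Notation choice_payoff s := (payoff (choice_strategy s)).

Lemma legal_choice_exists : exists s, legal_choice s.
Proof.
exists [ffun u => odflt u [pick u' | E G u u']].
apply/forallP => u; apply/implyP => uM; rewrite ffunE; case: pickP => //= none.
by have [u' uu'] := max_has_succ HG uM; move: (none u'); rewrite uu'.
Qed.

Lemma choice_strategy_ml s : legal_choice s -> ml_strategy G (VMax G) (choice_strategy s).
Proof.
move=> /forallP legal u uM; rewrite /choice_strategy; split => [u'||u'].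
- exact: ler0n.
- by rewrite (bigD1 (s u)) //= eqxx big1 ?addr0 // => u' /negPf ->.
- case: (eqVneq u' (s u)) => [-> _|_]; first exact: implyP (legal u) uM.
  by rewrite mulr0n eqxx.
Qed.

Lemma trans_choice_sum s u (F : V -> RR) : u \in VMax G ->
  \sum_u' trans G rho (choice_strategy s) u u' * F u' = F (s u).
Proof.
move=> uM; under eq_bigr do rewrite trans_max // /choice_strategy.
by rewrite (bigD1 (s u)) //= eqxx mul1r big1 ?addr0 // => u' /negPf ->; rewrite mul0r.
Qed.

(* The minimum principle shows that switching the choice at u to u' lowers the
   payoff nowhere, and it raises it at u. *)
Lemma switch_choice_improves s u u' :
  legal_choice s -> u \in VMax G -> E G u u' ->
  choice_payoff s u < (w G u u')%:~R + choice_payoff s u' ->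
  exists2 s', legal_choice s' & \sum_v choice_payoff s v < \sum_v choice_payoff s' v.
Proof.
move=> legal_s uM uu' improves.
pose s' : {ffun V -> V} := [ffun x => if x == u then u' else s x].
have legal_s' : legal_choice s'.
  apply/forallP => x; apply/implyP => xM; rewrite ffunE.
  by case: eqP => [->//|_]; apply: (implyP (forallP legal_s x)).
exists s' => //.
have [JT Jeq _] := payoff_bellman (choice_strategy_ml legal_s).
have [JT' Jeq' _] := payoff_bellman (choice_strategy_ml legal_s').
have J'u : choice_payoff s' u = (w G u u')%:~R + choice_payoff s' u'.
  by rewrite Jeq' ?(max_notin_tgt HG uM) // trans_choice_sum // ffunE eqxx.
pose z v := choice_payoff s' v - choice_payoff s v.
have z_ge0 : forall v, 0 <= z v.
  apply: (trans_min_principle (choice_strategy_ml legal_s')) => [t tT|a aT].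
    by rewrite /z JT ?JT' ?subr0.
  have [->|au] := eqVneq a u.
    by rewrite trans_choice_sum // ffunE eqxx /z J'u; lra.
  rewrite /z (Jeq' a aT) (Jeq a aT) -sumrB le_eqVlt; apply/predU1P; left.
  by apply: eq_bigr => b _; rewrite /trans /choice_strategy ffunE (negPf au); ring.
rewrite -subr_gt0 -sumrB (bigD1 u) //=.
apply: (@lt_le_trans _ _ (z u)); first by have := z_ge0 u'; rewrite /z J'u; lra.
by rewrite lerDl sumr_ge0 // => v _; apply: z_ge0.
Qed.

Lemma exists_max_optimal_choice :
  exists2 s, legal_choice s & max_optimal (choice_payoff s).
Proof.
have [s0 legal_s0] := legal_choice_exists.
case: (@arg_maxP _ _ _ s0 legal_choice (fun s => \sum_v choice_payoff s v) legal_s0).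
move=> s legal_s smax; exists s => // u u' uM uu'; rewrite leNgt; apply/negP => improves.
have [s' legal_s' gt_s] := switch_choice_improves legal_s uM uu' improves.
have le_s : \sum_v choice_payoff s' v <= \sum_v choice_payoff s v := smax s' legal_s'.
by rewrite leNgt gt_s in le_s.
Qed.

Section OptimalChoice.
Variable s : {ffun V -> V}.
Hypotheses (legal_s : legal_choice s) (opt_s : max_optimal (choice_payoff s)).

Lemma Val_m_rho_choice v : Val_m_rho G rho v = (choice_payoff s v)%:E.
Proof.
have [JT Jeq Jexp] := payoff_bellman (choice_strategy_ml legal_s).
apply/eqP; rewrite eq_le; apply/andP; split; last first.
  apply: ereal_sup_ubound; exists (choice_strategy s); last exact: Jexp.
  exact: choice_strategy_ml.
apply: ge_ereal_sup => _ [tau Htau <-].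
have [_ _ ->] := payoff_bellman Htau; rewrite lee_fin.
apply: excessive_dominates_payoff => // u uMin.
rewrite [leRHS]Jeq ?(min_notin_tgt HG uMin) // le_eqVlt; apply/predU1P; left.
by apply: eq_bigr => u' _; rewrite trans_min.
Qed.

Lemma tilde_edge_le u u' : tilde_edge G rho u u' ->
  (w G u u')%:~R + choice_payoff s u' <= choice_payoff s u.
Proof.
move=> [uu' tilde_min]; have uT := edge_notin_tgt HG uu'.
have [uMin|uMin] := boolP (u \in VMin G); last first.
  exact: opt_s (max_of_notin HG uT uMin) uu'.
have [_ argmin] := tilde_min uMin.
case: (Hrho uMin) => rho_ge0 rho_sum1 _.
have [_ Jeq _] := payoff_bellman (choice_strategy_ml legal_s).
rewrite [leRHS]Jeq //.
apply: (@le_trans _ _ (\sum_u'' rho u u'' * ((w G u u')%:~R + choice_payoff s u'))).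
  by rewrite -mulr_suml rho_sum1 mul1r.
apply: ler_sum => u'' _; rewrite trans_min //.
have [->|nz] := eqVneq (rho u u'') 0; first by rewrite !mul0r.
apply: ler_wpM2l => //.
by have := argmin u'' nz; rewrite !Val_m_rho_choice -!EFinD lee_fin.
Qed.

End OptimalChoice.

End FixedMinStrategy.

Unset Implicit Arguments.

Theorem lemma19 (V : finType) (G : game V) (HG : wf_game G)
    (Hd : forall v, Val_d G v != +oo%E)
    (Hm : forall v, Val_m_bar G v != +oo%E)
    (rho : V -> V -> RR) (Hrho : ml_strategy G (VMin G) rho)
    (Hreach : forall v tau, ml_strategy G (VMax G) tau ->
                reach_prob G rho tau v = 1%E) :
  (forall v s, tilde_path G rho v s -> first_visit_end G v s ->
     ((path_weight G v s)%:~R%:E <= Val_m_rho G rho v)%E) /\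
  (forall v s, s != [::] -> last v s = v -> tilde_path G rho v s ->
     path_weight G v s <= 0).
Proof.
have [s legal_s opt_s] := exists_max_optimal_choice HG Hrho Hreach.
have [JT _ _] := payoff_bellman HG Hrho Hreach (choice_strategy_ml legal_s).
have path_le := tilde_path_weight_le (tilde_edge_le HG Hrho Hreach legal_s opt_s).
split => [v p /path_le + /andP[lT _] | v p _ lv /path_le].
  by rewrite (Val_m_rho_choice HG Hrho Hreach legal_s opt_s) lee_fin JT //; lra.
by rewrite lv -(lerz0 RR); lra.
Qed.
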